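(* Suppose there exist points $u_*,u^*\in[a,b]$, independent of $m$, such that $|g_m(u)|\le K|g_m(u^* )|$ and $|g_m(u)|\ge K|g_m(u_* )|$ for all $u\in[a,b]$ and all $m$. Suppose further there are constants $\nu_1,\nu_2\in\mathbb R$, $\alpha_1,\alpha_2\ge0$, $\beta_1,\beta_2>0$, independent of $m$ and $n$, such that $$|g_m(u^* )|^2\asymp|m|^{-2\nu_1}\exp(-\alpha_1|m|^{\beta_1})\ (\nu_1>0\text{ if }\alpha_1=0),\qquad |g_m(u_* )|^2\asymp|m|^{-2\nu_2}\exp(-\alpha_2|m|^{\beta_2})\ (\nu_2>0\text{ if }\alpha_2=0).$$ Then the convergence rates in the discrete model are independent of the choice of $M$ and the selection of the sampling points $\underline u$ (and hence coincide with the convergence rates in the continuous model) if and only if either $\alpha_1\alpha_2>0$ and $\beta_1=\beta_2$, or $\alpha_1=\alpha_2=0$ and $\nu_1=\nu_2$.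
   Context: Let $T=[0,1]$, $U=[a,b]$, $-\infty<a\le b<\infty$; $f\in L^2(T)$ and each blurring function $g(u,\cdot)$ are $1$-periodic. Continuous model: $y(u,t)=\int_T f(x)g(u,t-x)dx+n^{-1/2}z(u,t)$, $u\in U,t\in T$, $z$ two-dimensional Gaussian white noise. Discrete model with design $(M,\underline u)$, $\underline u=(u_1,\dots,u_M)\in U^M$, $n=NM$: $y(u_l,t_i)=\int_T f(x)g(u_l,t_i-x)dx+\varepsilon_{li}$, $t_i=i/N$, $\varepsilon_{li}$ i.i.d. $N(0,1)$. $g_m(u)=\int_T g(u,t)e^{-i2\pi mt}dt$ (continuous in $u$); $\tau_1^c(m)=\int_a^b|g_m(u)|^2du$, $\tau_1^d(m,\underline u,M)=M^{-1}\sum_l|g_m(u_l)|^2$. $K$ is a positive constant independent of $m,n,M,\underline u$; $x_m\asymp y_m$ means $C_1y_m\le x_m\le C_2y_m$ for constants $0<C_1\le C_2<\infty$ independent of $m$ and all $|m|$ large. Convergence rates: estimation is of $f$ over Besov balls $B^s_{p,q}(A)$ (defined via the periodized Meyer wavelet coefficients: $f\in L^p(T)$ with $(\sum_k|a_{j_0k}|^p)^{1/p}+(\sum_{j\ge j_0}2^{js'q}(\sum_k|b_{jk}|^p)^{q/p})^{1/q}\le A$, $s'=s+1/2-1/p$, $1\le p,q\le\infty$) under $L^2(T)$ risk. For a given model (the continuous model, or the discrete model with a given design), if $\tau_1$ of that model satisfies $K\varepsilon_n|m|^{-2\nu}(\ln|m|)^{-\lambda}e^{-\alpha|m|^\beta}\le\tau_1(m)\le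 K\varepsilon_n|m|^{-2\nu}(\ln|m|)^{-\lambda}e^{-\alpha|m|^\beta}$ (same $\nu,\lambda,\alpha,\beta,\varepsilon_n$ on both sides), its ''convergence rate'' is the order in $n$ of the asymptotic minimax lower bound for the $L^2$-risk, namely, with $n^*=n\varepsilon_n$, $s^*=s+1/2-1/\min(p,2)$: $(n^* )^{-2s/(2s+2\nu+1)}(\ln n^* )^{2s\lambda/(2s+2\nu+1)}$ if $\alpha=0,\nu(2-p)<ps^*$; $(\ln n^*/n^* )^{2s^*/(2s^*+2\nu)}(\ln n^* )^{2s^*\lambda/(2s^*+2\nu)}$ if $\alpha=0,\nu(2-p)\ge ps^*$; $(\ln n^* )^{-2s^*/\beta}$ if $\alpha>0$. This lower bound is attained up to at most a logarithmic factor by a block thresholding wavelet estimator. Two rates are ''the same'' if they agree up to constant factors for every Besov ball. *)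

From Stdlib Require Import Reals ZArith List.
From Coquelicot Require Import Coquelicot.
Import ListNotations.
Open Scope R_scope.

Definition absZ (m : Z) : R := Rabs (IZR m).

Definition asympZ (x y : Z -> R) : Prop :=
  exists C1 C2 m0 : R, 0 < C1 /\ 0 < C2 /\
    forall m : Z, m0 <= absZ m -> C1 * y m <= x m /\ x m <= C2 * y m.

Definition tau_shape (nu lam alpha beta : R) (m : Z) : R :=
  Rpower (absZ m) (-2 * nu) * Rpower (ln (absZ m)) (- lam)
  * exp (- alpha * Rpower (absZ m) beta).

Definition design_ok (a b : R) (M : nat) (u : nat -> R) : Prop :=
  (1 <= M)%nat /\ forall l : nat, (l < M)%nat -> a <= u l <= b.

Definition tau_d (gm : Z -> R -> C) (M : nat) (u : nat -> R) (m : Z) : R :=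
  / INR M * fold_right Rplus 0 (map (fun l => (Cmod (gm m (u l)))^2) (seq 0 M)).

Definition tau_form (tau : Z -> R) (nu lam alpha beta : R) (eps : nat -> R) : Prop :=
  (forall n : nat, 0 < eps n) /\ 0 <= alpha /\ 0 < beta /\ (alpha = 0 -> 0 < nu) /\
  exists C1 C2 m0 : R, 0 < C1 /\ 0 < C2 /\
    forall (n : nat) (m : Z), m0 <= absZ m ->
      C1 * eps n * tau_shape nu lam alpha beta m <= tau m /\
      tau m <= C2 * eps n * tau_shape nu lam alpha beta m.

(* Besov index p in [1, +oo] is encoded by its reciprocal ip = 1/p in [0,1]
   (ip = 0 <-> p = +oo).  s* = s + 1/2 - 1/min(p,2) = s + 1/2 - max(ip, 1/2). *)
Definition sstar (s ip : R) : R := s + / 2 - Rmax ip (/ 2).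

(* The minimax convergence rate, as a function of n* = n eps_n.
   The condition nu (2 - p) < p s*  is written  nu (2 ip - 1) < s*
   (divide by p > 0). *)
Definition rate (s ip nu lam alpha beta : R) (ns : R) : R :=
  if Req_EM_T alpha 0 then
    if Rlt_dec (nu * (2 * ip - 1)) (sstar s ip) then
      Rpower ns (- (2 * s) / (2 * s + 2 * nu + 1))
      * Rpower (ln ns) (2 * s * lam / (2 * s + 2 * nu + 1))
    else
      Rpower (ln ns / ns) (2 * sstar s ip / (2 * sstar s ip + 2 * nu))
      * Rpower (ln ns) (2 * sstar s ip * lam / (2 * sstar s ip + 2 * nu))
  else Rpower (ln ns) (- (2 * sstar s ip) / beta).

Definition same_order (r1 r2 : nat -> R) : Prop :=
  exists (c1 c2 : R) (N0 : nat), 0 < c1 /\ 0 < c2 /\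
    forall n : nat, (N0 <= n)%nat -> c1 * r2 n <= r1 n /\ r1 n <= c2 * r2 n.

(* Besov parameters considered: s > 0, p in [1, +oo] (via ip = 1/p), s* > 0.
   (The rate does not depend on q nor on the radius A.) *)
Definition besov_ok (s ip : R) : Prop := 0 < s /\ 0 <= ip <= 1 /\ 0 < sstar s ip.

Definition same_rates (tau tau' : Z -> R) : Prop :=
  forall (nu lam alpha beta : R) (eps : nat -> R)
         (nu' lam' alpha' beta' : R) (eps' : nat -> R),
    tau_form tau nu lam alpha beta eps ->
    tau_form tau' nu' lam' alpha' beta' eps' ->
    forall s ip : R, besov_ok s ip ->
      same_order (fun n => rate s ip nu lam alpha beta (INR n * eps n))
                 (fun n => rate s ip nu' lam' alpha' beta' (INR n * eps' n)).

Definition rates_design_independent (gm : Z -> R -> C) (a b : R) : Prop :=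
  forall (M1 : nat) (u1 : nat -> R) (M2 : nat) (u2 : nat -> R),
    design_ok a b M1 u1 -> design_ok a b M2 u2 ->
    same_rates (tau_d gm M1 u1) (tau_d gm M2 u2).

From Stdlib Require Import Reals ZArith List Lra Lia.
From Coquelicot Require Import Coquelicot.
Open Scope R_scope.

(* For every design, tau_1^d(m) = M^{-1} sum_l |g_m(u_l)|^2 is squeezed between constant
   multiples of |g_m(u_* )|^2 and |g_m(u^* )|^2.  Comparing logarithms of the two-sided form
   along large |m|, an envelope pair of the same type forces every admissible
   parameterisation of tau_1^d to have that type: alpha > 0 and beta = beta_1 in the
   exponential case, alpha = lambda = 0 and nu = nu_1 in the polynomial case.  The rate then
   depends on the design only through n* = n eps_n, with eps_n bounded above and below, and
   the rate functions x^r, (ln x / x)^r, (ln x)^r change by bounded factors when x is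
   rescaled by bounded factors.  Conversely, the one-point designs u = u^* and u = u_* realise
   the two envelopes; for s = 1, p = 2 the logarithms of their rates are -c ln n or
   -c ln ln n, and their difference stays bounded only when the exponents agree. *)

(** * Growth at infinity *)

Lemma eventually_gt (M : R) : Rbar_locally p_infty (fun x => M < x).
Proof. exists M. auto. Qed.

Lemma Rpower_gt_0 (x b : R) : 0 < Rpower x b.
Proof. apply exp_pos. Qed.

Lemma Rpower_0_r (x : R) : Rpower x 0 = 1.
Proof. unfold Rpower. rewrite Rmult_0_l. apply exp_0. Qed.

Lemma eventually_ln_gt (T : R) : Rbar_locally p_infty (fun x => T < ln x).
Proof. exact (is_lim_ln_p _ (eventually_gt T)). Qed.

Lemma eventually_ln_ln_gt (T : R) : Rbar_locally p_infty (fun x => T < ln (ln x)).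
Proof.
  apply (filter_imp (fun x => exp T < ln x)); [|apply eventually_ln_gt].
  intros x hx. rewrite <- (ln_exp T). apply ln_increasing; [apply exp_pos | exact hx].
Qed.

Lemma eventually_Rpower_gt (b M : R) : 0 < b -> Rbar_locally p_infty (fun x => M < Rpower x b).
Proof.
  intros hb. apply (filter_imp (fun x => Rabs M / b < ln x)); [|apply eventually_ln_gt].
  intros x hx. unfold Rpower.
  assert (Rabs M < b * ln x).
  { apply (Rmult_lt_compat_l b) in hx; [|exact hb].
    replace (b * (Rabs M / b)) with (Rabs M) in hx by (field; lra). exact hx. }
  pose proof (exp_ineq1_le (b * ln x)). pose proof (Rle_abs M). lra.
Qed.

Lemma eventually_ln_lt_linear (A Q D : R) : 0 < A ->
  Rbar_locally p_infty (fun y => Q * ln y + D < A * y).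
Proof.
  intros hA.
  set (e := A / (2 * (Rabs Q + 1))).
  assert (he : 0 < e) by (apply Rdiv_lt_0_compat; [lra | pose proof (Rabs_pos Q); lra]).
  assert (hQe : Rabs Q * e <= A / 2).
  { unfold e. apply (Rmult_le_reg_r (2 * (Rabs Q + 1))); [pose proof (Rabs_pos Q); lra|].
    field_simplify; [|pose proof (Rabs_pos Q); lra]. nra. }
  pose proof (is_lim_div_ln_p (fun r => Rabs (r - 0) < e) (locally_ball 0 (mkposreal e he)))
    as hlim.
  unfold filtermap in hlim.
  generalize (filter_and _ _ hlim (eventually_gt (Rmax 0 (2 * D / A)))).
  apply filter_imp. intros y [hl hy].
  pose proof (Rmax_l 0 (2 * D / A)). pose proof (Rmax_r 0 (2 * D / A)).
  assert (hy0 : 0 < y) by lra.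
  rewrite Rminus_0_r, Rabs_div, (Rabs_pos_eq y) in hl by lra.
  assert (hln : Rabs (ln y) < e * y).
  { apply (Rmult_lt_compat_r y) in hl; [|exact hy0].
    replace (Rabs (ln y) / y * y) with (Rabs (ln y)) in hl by (field; lra). exact hl. }
  assert (hD : D < A / 2 * y).
  { replace D with (A / 2 * (2 * D / A)) by (field; lra).
    apply Rmult_lt_compat_l; lra. }
  assert (Q * ln y <= Rabs Q * Rabs (ln y)) by (rewrite <- Rabs_mult; apply Rle_abs).
  assert (Rabs Q * Rabs (ln y) <= Rabs Q * (e * y))
    by (apply Rmult_le_compat_l; [apply Rabs_pos | lra]).
  nra.
Qed.

Lemma ln_le_sub_1 (y : R) : 0 < y -> ln y <= y - 1.
Proof. intros hy. pose proof (exp_ineq1_le (ln y)) as h. rewrite exp_ln in h; lra. Qed.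

Lemma eventually_log_terms_lt_Rpower (A b P Q D : R) : 0 < A -> 0 < b ->
  Rbar_locally p_infty (fun x => P * ln x + Q * ln (ln x) + D < A * Rpower x b).
Proof.
  intros hA hb. set (S := Rabs P + Rabs Q).
  destruct (eventually_ln_lt_linear A (S / b) D hA) as [Y hY].
  generalize (filter_and _ _ (eventually_Rpower_gt b Y hb) (eventually_ln_gt 1)).
  apply filter_imp. intros x [hxY hx1].
  specialize (hY _ hxY). rewrite ln_Rpower in hY.
  replace (S / b * (b * ln x)) with (S * ln x) in hY by (field; lra).
  assert (hll : 0 < ln (ln x) <= ln x).
  { split; [rewrite <- ln_1; apply ln_increasing; lra|].
    pose proof (ln_le_sub_1 (ln x)); lra. }
  assert (P * ln x <= Rabs P * ln x) by (apply Rmult_le_compat_r; [lra | apply Rle_abs]).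
  assert (Q * ln (ln x) <= Rabs Q * ln x).
  { apply Rle_trans with (Rabs Q * ln (ln x)).
    - apply Rmult_le_compat_r; [lra | apply Rle_abs].
    - apply Rmult_le_compat_l; [apply Rabs_pos | lra]. }
  unfold S in hY. lra.
Qed.

Lemma eventually_Rpower_dominated (a a' b b' : R) : 0 < a -> b' < b ->
  Rbar_locally p_infty (fun x => a' * Rpower x b' <= a / 2 * Rpower x b).
Proof.
  intros ha hbb.
  apply (filter_imp (fun x => 2 * Rabs a' / a < Rpower x (b - b')));
    [|apply eventually_Rpower_gt; lra].
  intros x hx. replace b with (b' + (b - b')) by ring. rewrite Rpower_plus.
  pose proof (Rpower_gt_0 x b'). pose proof (Rle_abs a').
  assert (Rabs a' < a / 2 * Rpower x (b - b')).
  { apply (Rmult_lt_compat_l (a / 2)) in hx; [|lra].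
    replace (a / 2 * (2 * Rabs a' / a)) with (Rabs a') in hx by (field; lra). exact hx. }
  nra.
Qed.

(** * Logarithms of the two-sided shapes *)

(* Bounds along |m| or n only hold at integer points, hence "frequently" rather than
   "eventually". *)
Definition frequently (P : R -> Prop) : Prop := forall M, exists x, M < x /\ P x.

Lemma frequently_eventually (P Q : R -> Prop) :
  frequently P -> Rbar_locally p_infty Q -> exists x, P x /\ Q x.
Proof.
  intros hP [M hQ]. destruct (hP M) as [x [hx px]]. exists x; auto.
Qed.

Definition log_shape (p q al be x : R) : R :=
  - p * ln x - q * ln (ln x) - al * Rpower x be.

Lemma log_shape_sub (p q al be p' q' al' be' x : R) :
  log_shape p q al be x - log_shape p' q' al' be' x
  = log_shape (p - p') (q - q') al be x + al' * Rpower x be'.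
Proof. unfold log_shape. ring. Qed.

Lemma eventually_log_shape_lt (p q al be K : R) : 0 <= al -> 0 < be ->
  0 < al \/ 0 < p \/ (p = 0 /\ 0 < q) ->
  Rbar_locally p_infty (fun x => log_shape p q al be x < K).
Proof.
  intros hal hbe hc. unfold log_shape.
  destruct hc as [hpos | [hp | [-> hq]]].
  - generalize (eventually_log_terms_lt_Rpower al be (- p) (- q) (- K) hpos hbe).
    apply filter_imp. intros x hx. lra.
  - destruct (eventually_ln_lt_linear p (- q) (- K) hp) as [Y hY].
    generalize (eventually_ln_gt Y). apply filter_imp. intros x hx.
    specialize (hY _ hx). pose proof (Rpower_gt_0 x be). nra.
  - generalize (eventually_ln_ln_gt (- K / q)). apply filter_imp. intros x hx.
    apply (Rmult_lt_compat_l q) in hx; [|exact hq].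
    replace (q * (- K / q)) with (- K) in hx by (field; lra).
    pose proof (Rpower_gt_0 x be). nra.
Qed.

Lemma frequently_imp (P Q : R -> Prop) :
  (forall x, P x -> Q x) -> frequently P -> frequently Q.
Proof. intros hPQ hP M. destruct (hP M) as [x [hx px]]. exists x; auto. Qed.

Lemma not_frequently_above_log_shape (p q al be k : R) : 0 <= al -> 0 < be ->
  0 < al \/ 0 < p \/ (p = 0 /\ 0 < q) ->
  ~ frequently (fun x => k <= log_shape p q al be x).
Proof.
  intros hal hbe hc hfr.
  destruct (frequently_eventually _ _ hfr (eventually_log_shape_lt p q al be k hal hbe hc))
    as [x [h1 h2]].
  lra.
Qed.

Lemma log_shape_frequently_bounded (p q al be k1 k2 : R) : 0 <= al -> 0 < be ->
  frequently (fun x => k1 <= log_shape p q al be x <= k2) -> al = 0 /\ p = 0 /\ q = 0.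
Proof.
  intros hal hbe hfr.
  pose proof (frequently_imp _ _ (fun x (h : _ /\ _) => proj1 h) hfr) as hlow.
  assert (hal0 : al = 0).
  { destruct hal as [hpos|]; [|auto].
    destruct (not_frequently_above_log_shape p q al be k1 (Rlt_le _ _ hpos) hbe
                (or_introl hpos) hlow). }
  subst al.
  assert (hup : frequently (fun x => - k2 <= log_shape (- p) (- q) 0 be x)).
  { apply (frequently_imp _ _ (fun x (h : _ /\ _) => proj2 h)) in hfr.
    revert hfr. apply frequently_imp. unfold log_shape. intros x hx. lra. }
  assert (hp : p = 0).
  { destruct (Rtotal_order p 0) as [hneg | [-> | hpos]]; [exfalso | auto | exfalso].
    - apply (not_frequently_above_log_shape (- p) (- q) 0 be (- k2)); auto with real; lra.
    - apply (not_frequently_above_log_shape p q 0 be k1); auto with real. }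
  subst p. split; [auto | split; [auto |]].
  destruct (Rtotal_order q 0) as [hneg | [-> | hpos]]; [exfalso | auto | exfalso].
  - apply (not_frequently_above_log_shape (- 0) (- q) 0 be (- k2)); auto with real.
  - apply (not_frequently_above_log_shape 0 q 0 be k1); auto with real.
Qed.

Lemma log_shape_Rpower_frequently_bounded_above (p q al be a b K : R) :
  0 <= al -> 0 < be -> 0 < a -> 0 < b ->
  frequently (fun x => log_shape p q al be x + a * Rpower x b <= K) -> 0 < al /\ b <= be.
Proof.
  intros hal hbe ha hb hfr.
  assert (hdom : Rbar_locally p_infty (fun x => al * Rpower x be <= a / 2 * Rpower x b) -> False).
  { intros hev.
    destruct (frequently_eventually _ _ hfr
      (filter_and _ _ hev (eventually_log_terms_lt_Rpower (a / 2) b p q K ltac:(lra) hb)))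
      as [x [h1 [h2 h3]]].
    unfold log_shape in h1. lra. }
  destruct hal as [hpos | <-].
  - split; [exact hpos|]. destruct (Rle_lt_dec b be) as [hle | hlt]; [exact hle|].
    destruct (hdom (eventually_Rpower_dominated a al b be ha hlt)).
  - exfalso. apply hdom, filter_forall. intros x.
    pose proof (Rpower_gt_0 x b). nra.
Qed.

Lemma tau_shape_gt_0 (nu lam al be : R) (m : Z) : 0 < tau_shape nu lam al be m.
Proof. unfold tau_shape. repeat apply Rmult_lt_0_compat; apply exp_pos. Qed.

Lemma ln_tau_shape (nu lam al be : R) (m : Z) :
  ln (tau_shape nu lam al be m) = log_shape (2 * nu) lam al be (absZ m).
Proof.
  unfold tau_shape, log_shape.
  rewrite !ln_mult, !ln_Rpower, ln_exp; try apply exp_pos.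
  - ring.
  - apply Rmult_lt_0_compat; apply exp_pos.
Qed.

Lemma exists_absZ_gt (r : R) : exists m, r < absZ m.
Proof.
  exists (up r). destruct (archimed r) as [hup _].
  unfold absZ. pose proof (Rle_abs (IZR (up r))). lra.
Qed.

Lemma frequently_absZ (P : R -> Prop) (M0 : R) :
  (forall m, M0 <= absZ m -> P (absZ m)) -> frequently P.
Proof.
  intros hP M. destruct (exists_absZ_gt (Rmax M M0)) as [m hm].
  pose proof (Rmax_l M M0). pose proof (Rmax_r M M0).
  exists (absZ m). split; [lra | apply hP; lra].
Qed.

Lemma frequently_INR (P : R -> Prop) (N0 : nat) :
  (forall n, (N0 <= n)%nat -> P (INR n)) -> frequently P.
Proof.
  intros hP M. destruct (INR_archimed 1 (Rmax M (INR N0))) as [n hn]; [lra|].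
  rewrite Rmult_1_r in hn. pose proof (Rmax_l M (INR N0)). pose proof (Rmax_r M (INR N0)).
  exists (INR n). split; [lra|]. apply hP, INR_le. lra.
Qed.

Lemma ln_le_of_mul_le (a b x y : R) : 0 < a -> 0 < b -> 0 < x -> 0 < y ->
  a * x <= b * y -> ln x <= ln y + (ln b - ln a).
Proof.
  intros ha hb hx hy hle. apply ln_le in hle; [|now apply Rmult_lt_0_compat].
  rewrite !ln_mult in hle by assumption. lra.
Qed.

Lemma tau_form_ln_sandwich (tau S1 S2 : Z -> R) (nu lam al be : R) (eps : nat -> R)
    (kl kh m1 : R) :
  tau_form tau nu lam al be eps -> 0 < kl -> 0 < kh ->
  (forall m, 0 < S1 m) -> (forall m, 0 < S2 m) ->
  (forall m, m1 <= absZ m -> kl * S2 m <= tau m <= kh * S1 m) ->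
  exists k M, forall m, M <= absZ m ->
    ln (S2 m) - k <= ln (tau_shape nu lam al be m) <= ln (S1 m) + k.
Proof.
  intros [heps [_ [_ [_ [C1 [C2 [m0 [hC1 [hC2 hf]]]]]]]]] hkl hkh hS1 hS2 hs.
  pose proof (heps 0%nat) as he.
  assert (hCe1 : 0 < C1 * eps 0%nat) by (apply Rmult_lt_0_compat; auto).
  assert (hCe2 : 0 < C2 * eps 0%nat) by (apply Rmult_lt_0_compat; auto).
  exists (Rabs (ln (C2 * eps 0%nat) - ln kl) + Rabs (ln kh - ln (C1 * eps 0%nat))), (Rmax m0 m1).
  intros m hm. pose proof (Rmax_l m0 m1). pose proof (Rmax_r m0 m1).
  destruct (hf 0%nat m ltac:(lra)) as [f1 f2]. destruct (hs m ltac:(lra)) as [s1 s2].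
  pose proof (tau_shape_gt_0 nu lam al be m) as hsh.
  pose proof (ln_le_of_mul_le kl (C2 * eps 0%nat) _ _ hkl hCe2 (hS2 m) hsh ltac:(lra)).
  pose proof (ln_le_of_mul_le (C1 * eps 0%nat) kh _ _ hCe1 hkh hsh (hS1 m) ltac:(lra)).
  pose proof (Rle_abs (ln (C2 * eps 0%nat) - ln kl)).
  pose proof (Rle_abs (ln kh - ln (C1 * eps 0%nat))).
  pose proof (Rabs_pos (ln (C2 * eps 0%nat) - ln kl)).
  pose proof (Rabs_pos (ln kh - ln (C1 * eps 0%nat))).
  lra.
Qed.

Lemma tau_form_between_poly_shapes (tau : Z -> R) (nu lam al be : R) (eps : nat -> R)
    (nu0 b1 b2 kl kh m1 : R) :
  tau_form tau nu lam al be eps -> 0 < kl -> 0 < kh ->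
  (forall m, m1 <= absZ m ->
     kl * tau_shape nu0 0 0 b2 m <= tau m <= kh * tau_shape nu0 0 0 b1 m) ->
  al = 0 /\ nu = nu0 /\ lam = 0.
Proof.
  intros hf hkl hkh hs.
  destruct (tau_form_ln_sandwich _ _ _ _ _ _ _ _ _ _ _ hf hkl hkh
              (tau_shape_gt_0 _ _ _ _) (tau_shape_gt_0 _ _ _ _) hs) as [k [M hk]].
  destruct hf as [_ [hal [hbe _]]].
  assert (hfr : frequently (fun x => - k <= log_shape (2 * nu - 2 * nu0) (lam - 0) al be x <= k)).
  { apply (frequently_absZ _ M). intros m hm. specialize (hk m hm).
    rewrite !ln_tau_shape in hk.
    pose proof (log_shape_sub (2 * nu) lam al be (2 * nu0) 0 0 b1 (absZ m)).
    pose proof (log_shape_sub (2 * nu) lam al be (2 * nu0) 0 0 b2 (absZ m)).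
    lra. }
  destruct (log_shape_frequently_bounded _ _ _ _ _ _ hal hbe hfr) as [-> [hnu hlam]].
  split; [reflexivity | split; lra].
Qed.

Lemma tau_form_between_exp_shapes (tau : Z -> R) (nu lam al be : R) (eps : nat -> R)
    (n1 n2 a1 a2 b0 kl kh m1 : R) :
  tau_form tau nu lam al be eps -> 0 < kl -> 0 < kh -> 0 < a1 -> 0 < a2 -> 0 < b0 ->
  (forall m, m1 <= absZ m ->
     kl * tau_shape n2 0 a2 b0 m <= tau m <= kh * tau_shape n1 0 a1 b0 m) ->
  0 < al /\ be = b0.
Proof.
  intros hf hkl hkh ha1 ha2 hb0 hs.
  destruct (tau_form_ln_sandwich _ _ _ _ _ _ _ _ _ _ _ hf hkl hkh
              (tau_shape_gt_0 _ _ _ _) (tau_shape_gt_0 _ _ _ _) hs) as [k [M hk]].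
  destruct hf as [_ [hal [hbe _]]].
  assert (hup : frequently (fun x => log_shape (2 * nu - 2 * n1) (lam - 0) al be x
                                     + a1 * Rpower x b0 <= k)).
  { apply (frequently_absZ _ M). intros m hm. specialize (hk m hm).
    rewrite !ln_tau_shape in hk.
    pose proof (log_shape_sub (2 * nu) lam al be (2 * n1) 0 a1 b0 (absZ m)). lra. }
  assert (hlow : frequently (fun x => log_shape (2 * n2 - 2 * nu) (0 - lam) a2 b0 x
                                      + al * Rpower x be <= k)).
  { apply (frequently_absZ _ M). intros m hm. specialize (hk m hm).
    rewrite !ln_tau_shape in hk.
    pose proof (log_shape_sub (2 * n2) 0 a2 b0 (2 * nu) lam al be (absZ m)). lra. }
  destruct (log_shape_Rpower_frequently_bounded_above _ _ _ _ _ _ _ hal hbe ha1 hb0 hup)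
    as [hal_pos hb0_le].
  destruct (log_shape_Rpower_frequently_bounded_above _ _ _ _ _ _ _
              (Rlt_le _ _ ha2) hb0 hal_pos hbe hlow) as [_ hbe_le].
  split; [exact hal_pos | lra].
Qed.

(** * Rates under rescaling of n* *)

Lemma ln_diff_le_of_ratio (c1 c2 x y : R) : 0 < c1 -> 0 < y -> c1 * y <= x <= c2 * y ->
  Rabs (ln x - ln y) <= Rabs (ln c1) + Rabs (ln c2).
Proof.
  intros hc1 hy [h1 h2].
  assert (hc1y : 0 < c1 * y) by (apply Rmult_lt_0_compat; assumption).
  assert (hc2 : 0 < c2) by nra.
  apply ln_le in h2; [|lra]. apply ln_le in h1; [|exact hc1y].
  rewrite ln_mult in h1, h2 by assumption.
  pose proof (Rle_abs (ln c2)). pose proof (Rle_abs (- ln c1)) as habs.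
  rewrite Rabs_Ropp in habs. pose proof (Rabs_pos (ln c1)). pose proof (Rabs_pos (ln c2)).
  apply Rabs_le_between. lra.
Qed.

Lemma ln_comparable_of_comparable (c1 c2 x y : R) : 0 < c1 ->
  exp (2 * (Rabs (ln c1) + Rabs (ln c2)) + 1) <= y -> c1 * y <= x <= c2 * y ->
  0 < ln y /\ / 2 * ln y <= ln x <= 2 * ln y.
Proof.
  intros hc1 hy hxy. set (B := Rabs (ln c1) + Rabs (ln c2)) in *.
  assert (hB : 0 <= B)
    by (unfold B; pose proof (Rabs_pos (ln c1)); pose proof (Rabs_pos (ln c2)); lra).
  pose proof (exp_pos (2 * B + 1)).
  assert (hlny : 2 * B + 1 <= ln y) by (rewrite <- (ln_exp (2 * B + 1)); apply ln_le; assumption).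
  pose proof (ln_diff_le_of_ratio c1 c2 x y hc1 ltac:(lra) hxy) as hdiff.
  fold B in hdiff. apply Rabs_le_between in hdiff. lra.
Qed.

Definition log_scale_stable (F : R -> R) : Prop :=
  forall c1 c2, 0 < c1 -> exists B Y, forall x y, Y <= y -> c1 * y <= x <= c2 * y ->
    Rabs (ln (F x) - ln (F y)) <= B.

Lemma log_scale_stable_id : log_scale_stable (fun x => x).
Proof.
  intros c1 c2 hc1. exists (Rabs (ln c1) + Rabs (ln c2)), 1. intros x y hy hxy.
  apply ln_diff_le_of_ratio; [assumption | lra | assumption].
Qed.

Lemma log_scale_stable_ln : log_scale_stable ln.
Proof.
  intros c1 c2 hc1.
  exists (Rabs (ln (/ 2)) + Rabs (ln 2)), (exp (2 * (Rabs (ln c1) + Rabs (ln c2)) + 1)).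
  intros x y hy hxy. destruct (ln_comparable_of_comparable c1 c2 x y hc1 hy hxy) as [hy0 hln].
  apply ln_diff_le_of_ratio; [lra | assumption | assumption].
Qed.

Lemma log_scale_stable_ln_div : log_scale_stable (fun x => ln x / x).
Proof.
  intros c1 c2 hc1.
  set (B := Rabs (ln c1) + Rabs (ln c2)).
  exists (Rabs (ln (/ 2)) + Rabs (ln 2) + B), (exp (2 * B + 1)).
  intros x y hy hxy. pose proof (exp_pos (2 * B + 1)).
  destruct (ln_comparable_of_comparable c1 c2 x y hc1 hy hxy) as [hy0 hln].
  assert (hx : 0 < x) by nra.
  pose proof (ln_diff_le_of_ratio (/ 2) 2 (ln x) (ln y) ltac:(lra) hy0 hln) as h1.
  pose proof (ln_diff_le_of_ratio c1 c2 x y hc1 ltac:(lra) hxy) as h2. fold B in h2.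
  rewrite !ln_div by lra.
  apply Rabs_le_between in h1, h2. apply Rabs_le_between. lra.
Qed.

Lemma exp_le_exp (x y : R) : x <= y -> exp x <= exp y.
Proof. intros [hlt | ->]; [left; apply exp_increasing, hlt | right; reflexivity]. Qed.

Lemma Rpower_between_of_ln_diff (u v r B : R) : Rabs (ln u - ln v) <= B ->
  exp (- (Rabs r * B)) * Rpower v r <= Rpower u r <= exp (Rabs r * B) * Rpower v r.
Proof.
  intros h. unfold Rpower.
  replace (r * ln u) with (r * (ln u - ln v) + r * ln v) by ring. rewrite exp_plus.
  assert (hr : Rabs (r * (ln u - ln v)) <= Rabs r * B)
    by (rewrite Rabs_mult; apply Rmult_le_compat_l; [apply Rabs_pos | assumption]).
  apply Rabs_le_between in hr. pose proof (exp_pos (r * ln v)).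
  split; apply Rmult_le_compat_r; try lra; apply exp_le_exp; lra.
Qed.

Lemma tau_form_eps_bounded (tau : Z -> R) (nu lam al be : R) (eps : nat -> R) :
  tau_form tau nu lam al be eps -> exists e1 e2, 0 < e1 /\ forall n, e1 <= eps n <= e2.
Proof.
  intros [heps [_ [_ [_ [C1 [C2 [m0 [hC1 [hC2 hf]]]]]]]]].
  destruct (exists_absZ_gt m0) as [m hm%Rlt_le].
  pose proof (tau_shape_gt_0 nu lam al be m) as hsh.
  assert (hT : 0 < tau m).
  { destruct (hf 0%nat m hm) as [h _]. pose proof (heps 0%nat).
    assert (0 < C1 * eps 0%nat * tau_shape nu lam al be m)
      by (apply Rmult_lt_0_compat; [apply Rmult_lt_0_compat |]; assumption).
    lra. }
  exists (tau m / (C2 * tau_shape nu lam al be m)), (tau m / (C1 * tau_shape nu lam al be m)).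
  split; [apply Rdiv_lt_0_compat; [assumption | now apply Rmult_lt_0_compat]|].
  intros n. destruct (hf n m hm) as [h1 h2].
  split; apply Rmult_le_reg_r with (tau_shape nu lam al be m); try assumption.
  - apply Rmult_le_reg_l with C2; [assumption|].
    replace (C2 * (tau m / (C2 * tau_shape nu lam al be m) * tau_shape nu lam al be m))
      with (tau m) by (field; lra). lra.
  - apply Rmult_le_reg_l with C1; [assumption|].
    replace (C1 * (tau m / (C1 * tau_shape nu lam al be m) * tau_shape nu lam al be m))
      with (tau m) by (field; lra). lra.
Qed.

(* The rates are evaluated at n* = n eps_n; for bounded eps_n this changes n* only by a
   bounded factor. *)
Lemma same_order_Rpower_rescaled (f g F : R -> R) (r : R) (eps eps' : nat -> R)
    (e1 e2 e1' e2' : R) :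
  log_scale_stable F -> (forall x, f x = Rpower (F x) r) -> (forall x, g x = Rpower (F x) r) ->
  0 < e1 -> (forall n, e1 <= eps n <= e2) -> 0 < e1' -> (forall n, e1' <= eps' n <= e2') ->
  same_order (fun n => f (INR n * eps n)) (fun n => g (INR n * eps' n)).
Proof.
  intros hF hf hg he1 he he1' he'.
  assert (he2' : 0 < e2') by (destruct (he' 0%nat); lra).
  destruct (hF (e1 / e2') (e2 / e1') ltac:(apply Rdiv_lt_0_compat; assumption)) as [B [Y hB]].
  destruct (INR_archimed e1' Y he1') as [N hN].
  exists (exp (- (Rabs r * B))), (exp (Rabs r * B)), N.
  split; [apply exp_pos | split; [apply exp_pos |]].
  intros n hn. rewrite hf, hg. apply Rpower_between_of_ln_diff, hB.
  - pose proof (le_INR _ _ hn). pose proof (pos_INR n). destruct (he' n).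
    assert (INR N * e1' <= INR n * e1') by (apply Rmult_le_compat_r; lra).
    assert (INR n * e1' <= INR n * eps' n) by (apply Rmult_le_compat_l; lra).
    lra.
  - pose proof (pos_INR n). destruct (he n). destruct (he' n).
    assert (hlo : e1 / e2' * eps' n <= e1).
    { apply Rmult_le_reg_r with e2'; [assumption|].
      replace (e1 / e2' * eps' n * e2') with (e1 * eps' n) by (field; lra). nra. }
    assert (hup : e2 <= e2 / e1' * eps' n).
    { apply Rmult_le_reg_r with e1'; [assumption|].
      replace (e2 / e1' * eps' n * e1') with (e2 * eps' n) by (field; lra). nra. }
    split; nra.
Qed.

Lemma rate_poly_Rpower (s ip nu : R) :
  exists F r, log_scale_stable F /\ forall be x, rate s ip nu 0 0 be x = Rpower (F x) r.
Proof.
  unfold rate. destruct (Req_EM_T 0 0) as [_ | ne]; [| congruence].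
  destruct (Rlt_dec (nu * (2 * ip - 1)) (sstar s ip)).
  - exists (fun x => x), (- (2 * s) / (2 * s + 2 * nu + 1)).
    split; [exact log_scale_stable_id|]. intros be x.
    rewrite Rmult_0_r, Rdiv_0_l, Rpower_0_r. ring.
  - exists (fun x => ln x / x), (2 * sstar s ip / (2 * sstar s ip + 2 * nu)).
    split; [exact log_scale_stable_ln_div|]. intros be x.
    rewrite Rmult_0_r, Rdiv_0_l, Rpower_0_r. ring.
Qed.

Lemma rate_exp (s ip nu lam al be x : R) : al <> 0 ->
  rate s ip nu lam al be x = Rpower (ln x) (- (2 * sstar s ip) / be).
Proof. intros hal. unfold rate. destruct (Req_EM_T al 0); [contradiction | reflexivity]. Qed.

Lemma rates_design_independent_of_sandwich (gm : Z -> R -> C) (a b : R)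
    (nu1 nu2 al1 al2 be1 be2 kl kh m1 : R) :
  0 < kl -> 0 < kh -> 0 <= al1 -> 0 <= al2 -> 0 < be1 ->
  (forall M u, design_ok a b M u -> forall m, m1 <= absZ m ->
     kl * tau_shape nu2 0 al2 be2 m <= tau_d gm M u m <= kh * tau_shape nu1 0 al1 be1 m) ->
  (0 < al1 * al2 /\ be1 = be2) \/ (al1 = 0 /\ al2 = 0 /\ nu1 = nu2) ->
  rates_design_independent gm a b.
Proof.
  intros hkl hkh hal1 hal2 hbe1 hs hc M u M' u' hd hd'
         nu lam al be eps nu' lam' al' be' eps' hf hf' s ip _.
  destruct (tau_form_eps_bounded _ _ _ _ _ _ hf) as [e1 [e2 [he1 he]]].
  destruct (tau_form_eps_bounded _ _ _ _ _ _ hf') as [e1' [e2' [he1' he']]].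
  destruct hc as [[hprod <-] | [-> [-> <-]]].
  - assert (ha1 : 0 < al1) by (destruct hal1 as [|<-]; [assumption | lra]).
    assert (ha2 : 0 < al2) by (destruct hal2 as [|<-]; [assumption | lra]).
    destruct (tau_form_between_exp_shapes _ _ _ _ _ _ _ _ _ _ _ _ _ _
                hf hkl hkh ha1 ha2 hbe1 (hs M u hd)) as [hal ->].
    destruct (tau_form_between_exp_shapes _ _ _ _ _ _ _ _ _ _ _ _ _ _
                hf' hkl hkh ha1 ha2 hbe1 (hs M' u' hd')) as [hal' ->].
    apply (same_order_Rpower_rescaled _ _ ln (- (2 * sstar s ip) / be1) _ _ e1 e2 e1' e2');
      try assumption; [exact log_scale_stable_ln | |]; intros x; apply rate_exp; lra.
  - destruct (tau_form_between_poly_shapes _ _ _ _ _ _ _ _ _ _ _ _ hf hkl hkh (hs M u hd))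
      as [-> [-> ->]].
    destruct (tau_form_between_poly_shapes _ _ _ _ _ _ _ _ _ _ _ _ hf' hkl hkh (hs M' u' hd'))
      as [-> [-> ->]].
    destruct (rate_poly_Rpower s ip nu1) as [F [r [hF hrate]]].
    apply (same_order_Rpower_rescaled _ _ F r _ _ e1 e2 e1' e2'); auto.
Qed.

Lemma sum_map_between (L : list nat) (f : nat -> R) (A B : R) :
  (forall l, In l L -> A <= f l <= B) ->
  INR (length L) * A <= fold_right Rplus 0 (map f L) <= INR (length L) * B.
Proof.
  induction L as [| l L IH]; intros h; cbn [length map fold_right].
  - rewrite INR_0. lra.
  - pose proof (h l (or_introl eq_refl)). pose proof (IH (fun l' hl => h l' (or_intror hl))).
    rewrite S_INR. lra.
Qed.

Lemma tau_d_between (gm : Z -> R -> C) (a b : R) (M : nat) (u : nat -> R) (A B : R) (m : Z) :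
  design_ok a b M u -> (forall v, a <= v <= b -> A <= Cmod (gm m v) ^ 2 <= B) ->
  A <= tau_d gm M u m <= B.
Proof.
  intros [hM hu] h. unfold tau_d.
  destruct (sum_map_between (seq 0 M) (fun l => Cmod (gm m (u l)) ^ 2) A B) as [h1 h2].
  { intros l hl. apply in_seq in hl. apply h, hu. lia. }
  rewrite length_seq in h1, h2.
  assert (hM0 : 0 < INR M) by (apply lt_0_INR; lia).
  split; apply (Rmult_le_reg_l (INR M)); try assumption;
    rewrite <- Rmult_assoc, Rinv_r by lra; lra.
Qed.

Lemma tau_d_one_point (gm : Z -> R -> C) (v : R) (m : Z) :
  tau_d gm 1 (fun _ => v) m = Cmod (gm m v) ^ 2.
Proof. unfold tau_d. cbn [seq map fold_right]. rewrite INR_1, Rinv_1. ring. Qed.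

Lemma tau_shape_lam_0 (nu al be : R) (m : Z) :
  Rpower (absZ m) (-2 * nu) * exp (- al * Rpower (absZ m) be) = tau_shape nu 0 al be m.
Proof. unfold tau_shape. rewrite Ropp_0, Rpower_0_r. ring. Qed.

Lemma tau_d_sandwich (gm : Z -> R -> C) (a b uup ulo nu1 nu2 al1 al2 be1 be2 : R) :
  (exists K, 0 < K /\ forall u m, a <= u <= b -> Cmod (gm m u) <= K * Cmod (gm m uup)) ->
  (exists K, 0 < K /\ forall u m, a <= u <= b -> K * Cmod (gm m ulo) <= Cmod (gm m u)) ->
  asympZ (fun m => Cmod (gm m uup) ^ 2)
         (fun m => Rpower (absZ m) (-2 * nu1) * exp (- al1 * Rpower (absZ m) be1)) ->
  asympZ (fun m => Cmod (gm m ulo) ^ 2)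
         (fun m => Rpower (absZ m) (-2 * nu2) * exp (- al2 * Rpower (absZ m) be2)) ->
  exists kl kh m1, 0 < kl /\ 0 < kh /\ forall M u, design_ok a b M u ->
    forall m, m1 <= absZ m ->
      kl * tau_shape nu2 0 al2 be2 m <= tau_d gm M u m <= kh * tau_shape nu1 0 al1 be1 m.
Proof.
  intros [K1 [hK1 h1]] [K2 [hK2 h2]] [Cu1 [Cu [mu [_ [hCu hu]]]]] [Cl [Cl2 [ml [hCl [_ hl]]]]].
  exists (K2 ^ 2 * Cl), (K1 ^ 2 * Cu), (Rmax mu ml).
  split; [apply Rmult_lt_0_compat; [apply pow_lt |]; assumption|].
  split; [apply Rmult_lt_0_compat; [apply pow_lt |]; assumption|].
  intros M u hd m hm. pose proof (Rmax_l mu ml). pose proof (Rmax_r mu ml).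
  destruct (hu m ltac:(lra)) as [_ hup]. destruct (hl m ltac:(lra)) as [hlo _].
  rewrite tau_shape_lam_0 in hup, hlo.
  destruct (tau_d_between gm a b M u (K2 ^ 2 * Cmod (gm m ulo) ^ 2)
              (K1 ^ 2 * Cmod (gm m uup) ^ 2) m hd) as [t1 t2].
  { intros v hv. specialize (h1 v m hv). specialize (h2 v m hv).
    pose proof (Cmod_ge_0 (gm m v)). pose proof (Cmod_ge_0 (gm m ulo)).
    rewrite <- !Rpow_mult_distr. split; apply pow_incr; split; try assumption.
    apply Rmult_le_pos; lra. }
  pose proof (pow2_ge_0 K1). pose proof (pow2_ge_0 K2).
  split.
  - apply Rle_trans with (K2 ^ 2 * Cmod (gm m ulo) ^ 2); [| exact t1].
    rewrite Rmult_assoc. apply Rmult_le_compat_l; assumption.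
  - apply Rle_trans with (K1 ^ 2 * Cmod (gm m uup) ^ 2); [exact t2 |].
    rewrite Rmult_assoc. apply Rmult_le_compat_l; assumption.
Qed.

Lemma tau_form_of_asympZ (tau tau' : Z -> R) (nu al be : R) :
  0 <= al -> 0 < be -> (al = 0 -> 0 < nu) -> (forall m, tau m = tau' m) ->
  asympZ tau' (fun m => Rpower (absZ m) (-2 * nu) * exp (- al * Rpower (absZ m) be)) ->
  tau_form tau nu 0 al be (fun _ => 1).
Proof.
  intros hal hbe hnu htau [C1 [C2 [m0 [hC1 [hC2 h]]]]].
  split; [intros; lra|]. split; [assumption|]. split; [assumption|]. split; [assumption|].
  exists C1, C2, m0. split; [assumption | split; [assumption |]].
  intros n m hm. rewrite htau, <- tau_shape_lam_0, !Rmult_1_r. apply h, hm.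
Qed.

(** * Rates of the one-point designs *)

Lemma rate_gt_0 (s ip nu lam al be x : R) : 0 < rate s ip nu lam al be x.
Proof.
  unfold rate. destruct (Req_EM_T al 0); [destruct (Rlt_dec _ _)|];
    try apply Rmult_lt_0_compat; apply Rpower_gt_0.
Qed.

Lemma same_order_ln_bounded (r1 r2 : nat -> R) :
  same_order r1 r2 -> (forall n, 0 < r1 n) -> (forall n, 0 < r2 n) ->
  exists k N0, forall n, (N0 <= n)%nat -> - k <= ln (r1 n) - ln (r2 n) <= k.
Proof.
  intros [c1 [c2 [N0 [hc1 [hc2 h]]]]] hr1 hr2.
  exists (Rabs (ln c1) + Rabs (ln c2)), N0. intros n hn. destruct (h n hn) as [h1 h2].
  rewrite <- (Rmult_1_l (r1 n)) in h1, h2.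
  pose proof (ln_le_of_mul_le c1 1 _ _ hc1 Rlt_0_1 (hr2 n) (hr1 n) h1).
  pose proof (ln_le_of_mul_le 1 c2 _ _ Rlt_0_1 hc2 (hr1 n) (hr2 n) h2).
  rewrite ln_1 in *.
  pose proof (Rle_abs (ln c2)). pose proof (Rle_abs (- ln c1)) as habs.
  rewrite Rabs_Ropp in habs. pose proof (Rabs_pos (ln c1)). pose proof (Rabs_pos (ln c2)).
  lra.
Qed.

(* Exponents (p, q) of the rate n^{-p} (ln n)^{-q} for s = 1, p = 2 (so s* = 1). *)
Definition half_rate_exponents (nu al be : R) : R * R :=
  if Req_EM_T al 0 then (2 / (2 * nu + 3), 0) else (0, 2 / be).

Lemma sstar_1_half : sstar 1 (/ 2) = 1.
Proof. unfold sstar. rewrite Rmax_left by lra. field. Qed.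

Lemma ln_rate_1_half (nu al be x : R) :
  ln (rate 1 (/ 2) nu 0 al be x)
  = log_shape (fst (half_rate_exponents nu al be)) (snd (half_rate_exponents nu al be)) 0 1 x.
Proof.
  unfold rate, half_rate_exponents, log_shape. rewrite sstar_1_half.
  destruct (Req_EM_T al 0) as [_ | hal]; cbn [fst snd].
  - destruct (Rlt_dec (nu * (2 * / 2 - 1)) 1) as [_ | hge].
    + rewrite Rmult_0_r, Rdiv_0_l, Rpower_0_r, Rmult_1_r, ln_Rpower.
      replace (2 * 1 + 2 * nu + 1) with (2 * nu + 3) by ring. unfold Rdiv. ring.
    + exfalso. apply hge. replace (2 * / 2 - 1) with 0 by field. lra.
  - rewrite ln_Rpower. unfold Rdiv. ring.
Qed.

Lemma half_rate_exponents_of_same_order (nu1 al1 be1 nu2 al2 be2 : R) :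
  same_order (fun n => rate 1 (/ 2) nu1 0 al1 be1 (INR n * 1))
             (fun n => rate 1 (/ 2) nu2 0 al2 be2 (INR n * 1)) ->
  half_rate_exponents nu1 al1 be1 = half_rate_exponents nu2 al2 be2.
Proof.
  intros hso.
  destruct (same_order_ln_bounded _ _ hso (fun n => rate_gt_0 _ _ _ _ _ _ _)
              (fun n => rate_gt_0 _ _ _ _ _ _ _)) as [k [N0 hk]].
  set (e1 := half_rate_exponents nu1 al1 be1). set (e2 := half_rate_exponents nu2 al2 be2).
  assert (hfr : frequently
    (fun x => - k <= log_shape (fst e1 - fst e2) (snd e1 - snd e2) 0 1 x <= k)).
  { apply (frequently_INR _ N0). intros n hn. specialize (hk n hn). cbv beta in hk.
    rewrite Rmult_1_r, !ln_rate_1_half in hk. fold e1 e2 in hk.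
    pose proof (log_shape_sub (fst e1) (snd e1) 0 1 (fst e2) (snd e2) 0 1 (INR n)). lra. }
  destruct (log_shape_frequently_bounded _ _ _ _ _ _ (Rle_refl 0) Rlt_0_1 hfr) as [_ [hp hq]].
  apply injective_projections; lra.
Qed.

Lemma Rdiv_2_inj (x y : R) : 2 / x = 2 / y -> x = y.
Proof. unfold Rdiv. intros h. apply Rinv_eq_reg, (Rmult_eq_reg_l 2); [exact h | lra]. Qed.

Lemma half_rate_exponents_eq (nu1 al1 be1 nu2 al2 be2 : R) :
  0 <= al1 -> 0 <= al2 -> (al1 = 0 -> 0 < nu1) -> (al2 = 0 -> 0 < nu2) ->
  half_rate_exponents nu1 al1 be1 = half_rate_exponents nu2 al2 be2 ->
  (0 < al1 * al2 /\ be1 = be2) \/ (al1 = 0 /\ al2 = 0 /\ nu1 = nu2).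
Proof.
  intros hal1 hal2 hnu1 hnu2. unfold half_rate_exponents.
  destruct (Req_EM_T al1 0) as [z1 | z1]; destruct (Req_EM_T al2 0) as [z2 | z2];
    intros [hp hq]%pair_equal_spec.
  - right. apply Rdiv_2_inj in hp. repeat split; [assumption | assumption | lra].
  - exfalso. specialize (hnu1 z1).
    assert (0 < 2 / (2 * nu1 + 3)) by (apply Rdiv_lt_0_compat; lra). lra.
  - exfalso. specialize (hnu2 z2).
    assert (0 < 2 / (2 * nu2 + 3)) by (apply Rdiv_lt_0_compat; lra). lra.
  - left. split; [apply Rmult_lt_0_compat; lra | exact (Rdiv_2_inj _ _ hq)].
Qed.

Theorem theorem3 (gm : Z -> R -> C) (a b uup ulo nu1 nu2 al1 al2 be1 be2 : R) :
  a <= b ->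
  (forall (m : Z) (u : R), a <= u <= b ->
     filterlim (gm m) (within (fun x => a <= x <= b) (locally u)) (locally (gm m u))) ->
  a <= uup <= b -> a <= ulo <= b ->
  (exists K : R, 0 < K /\
     forall (u : R) (m : Z), a <= u <= b -> Cmod (gm m u) <= K * Cmod (gm m uup)) ->
  (exists K : R, 0 < K /\
     forall (u : R) (m : Z), a <= u <= b -> K * Cmod (gm m ulo) <= Cmod (gm m u)) ->
  0 <= al1 -> 0 <= al2 -> 0 < be1 -> 0 < be2 ->
  (al1 = 0 -> 0 < nu1) -> (al2 = 0 -> 0 < nu2) ->
  asympZ (fun m => (Cmod (gm m uup))^2)
         (fun m => Rpower (absZ m) (-2 * nu1) * exp (- al1 * Rpower (absZ m) be1)) ->
  asympZ (fun m => (Cmod (gm m ulo))^2)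
         (fun m => Rpower (absZ m) (-2 * nu2) * exp (- al2 * Rpower (absZ m) be2)) ->
  (rates_design_independent gm a b <->
     ((0 < al1 * al2 /\ be1 = be2) \/ (al1 = 0 /\ al2 = 0 /\ nu1 = nu2))).
Proof.
  intros _ _ hup hlo hK1 hK2 hal1 hal2 hbe1 hbe2 hnu1 hnu2 hA1 hA2. split.
  - intros hR. apply half_rate_exponents_eq; try assumption.
    apply half_rate_exponents_of_same_order.
    assert (hd : forall v, a <= v <= b -> design_ok a b 1 (fun _ => v))
      by (intros v hv; split; [lia | auto]).
    assert (hbesov : besov_ok 1 (/ 2)) by (unfold besov_ok; rewrite sstar_1_half; lra).
    exact (hR 1%nat (fun _ => uup) 1%nat (fun _ => ulo) (hd _ hup) (hd _ hlo)
              nu1 0 al1 be1 (fun _ => 1) nu2 0 al2 be2 (fun _ => 1)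
              (tau_form_of_asympZ _ _ _ _ _ hal1 hbe1 hnu1 (tau_d_one_point gm uup) hA1)
              (tau_form_of_asympZ _ _ _ _ _ hal2 hbe2 hnu2 (tau_d_one_point gm ulo) hA2)
              1 (/ 2) hbesov).
  - intros hc.
    destruct (tau_d_sandwich gm a b uup ulo nu1 nu2 al1 al2 be1 be2 hK1 hK2 hA1 hA2)
      as [kl [kh [m1 [hkl [hkh hs]]]]].
    exact (rates_design_independent_of_sandwich gm a b nu1 nu2 al1 al2 be1 be2 kl kh m1
             hkl hkh hal1 hal2 hbe1 hs hc).
Qed.
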